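(* Let $(\mathcal{B}_1,\mathcal{B}_0)$ be a Rota-Baxter operator on a crossed module of Lie groups $(H,G,t,\Phi)$. Let $G\ltimes_\Phi H$ be the semi-direct product Lie group $G\times H$ with product $(a,p)\cdot_\Phi(b,q)=(ab,\ p\,\Phi(a)q)$. Define $\mathcal{B}:G\ltimes_\Phi H\to G\ltimes_\Phi H$ by $$\mathcal{B}(a,p)=\Big(\mathcal{B}_0(a),\ \Phi(\mathcal{B}_0(a))\,\mathcal{B}_1\big(\Phi(\mathcal{B}_0(a)^{-1}a^{-1})p\big)\Big),\qquad a\in G,\ p\in H.$$ Then $\mathcal{B}$ is a Rota-Baxter operator on the Lie group $(G\ltimes_\Phi H,\cdot_\Phi)$.
   Context: A crossed module of Lie groups is a quadruple $(H,G,t,\Phi)$ where $H,G$ are Lie groups, $t:H\to G$ is a Lie group homomorphism and $\Phi:G\to\mathrm{Aut}(H)$ is a smooth action of $G$ on $H$ by automorphisms such that $\Phi(t(p))q=pqp^{-1}$ and $t(\Phi(a)p)=a\,t(p)\,a^{-1}$ for all $p,q\in H$, $a\in G$. A Rota-Baxter operator on a Lie group $G$ is a smooth map $\mathcal{B}:G\to G$ with $\mathcal{B}(a)\mathcal{B}(b)=\mathcal{B}(a\mathcal{B}(a)b\mathcal{B}(a)^{-1})$ for all $a,b\in G$. A Rota-Baxter operator on a crossed module of Lie groups $(H,G,t,\Phi)$ is a pair $(\mathcal{B}_1,\mathcal{B}_0)$ of smooth maps $\mathcal{B}_1:H\to H$, $\mathcal{B}_0:G\to G$ such that (i) $\mathcal{B}_1,\mathcal{B}_0$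 are Rota-Baxter operators on $H$, $G$; (ii) $t\circ\mathcal{B}_1=\mathcal{B}_0\circ t$; (iii) $\Phi(\mathcal{B}_0(a))\mathcal{B}_1(p)=\mathcal{B}_1\big(\Phi(a\mathcal{B}_0(a))(p\mathcal{B}_1(p))\cdot\Phi(\mathcal{B}_0(a))\mathcal{B}_1(p)^{-1}\big)$ for all $a\in G,p\in H$. *)

(* Plain Rocq (no library needed): abstract (possibly infinite) groups given by
   their operations and axioms.  Smoothness is not formalized. *)

Record group_str (T : Type) := GroupStr {
  gmul : T -> T -> T;
  ginv : T -> T;
  gone : T;
  gmulA : forall x y z, gmul x (gmul y z) = gmul (gmul x y) z;
  gmul1l : forall x, gmul gone x = x;
  gmul1r : forall x, gmul x gone = x;
  gmulVl : forall x, gmul (ginv x) x = gone;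
  gmulVr : forall x, gmul x (ginv x) = gone
}.
Arguments gmul {T} g _ _.
Arguments ginv {T} g _.
Arguments gone {T} g.

Definition is_group_hom {H G : Type} (gH : group_str H) (gG : group_str G)
  (t : H -> G) : Prop :=
  forall p q, t (gmul gH p q) = gmul gG (t p) (t q).

(* Phi : G -> Aut(H) is an action of G on H by automorphisms
   (Phi a is a homomorphism, Phi 1 = id, Phi (ab) = Phi a o Phi b;
   in particular each Phi a is bijective with inverse Phi (a^-1)). *)
Definition is_action_by_aut {H G : Type} (gH : group_str H) (gG : group_str G)
  (Phi : G -> H -> H) : Prop :=
  (forall a, is_group_hom gH gH (Phi a)) /\
  (forall p, Phi (gone gG) p = p) /\
  (forall a b p, Phi (gmul gG a b) p = Phi a (Phi b p)).

Definition crossed_module {H G : Type} (gH : group_str H) (gG : group_str G)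
  (t : H -> G) (Phi : G -> H -> H) : Prop :=
  is_group_hom gH gG t /\ is_action_by_aut gH gG Phi /\
  (forall p q, Phi (t p) q = gmul gH (gmul gH p q) (ginv gH p)) /\
  (forall a p, t (Phi a p) = gmul gG (gmul gG a (t p)) (ginv gG a)).

Definition rota_baxter {G : Type} (gG : group_str G) (B : G -> G) : Prop :=
  forall a b, gmul gG (B a) (B b) =
    B (gmul gG (gmul gG (gmul gG a (B a)) b) (ginv gG (B a))).

Definition rota_baxter_cm {H G : Type} (gH : group_str H) (gG : group_str G)
  (t : H -> G) (Phi : G -> H -> H) (B1 : H -> H) (B0 : G -> G) : Prop :=
  rota_baxter gH B1 /\ rota_baxter gG B0 /\
  (forall p, t (B1 p) = B0 (t p)) /\
  (forall a p, Phi (B0 a) (B1 p) =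
     B1 (gmul gH (Phi (gmul gG a (B0 a)) (gmul gH p (B1 p)))
                 (ginv gH (Phi (B0 a) (B1 p))))).

Definition sd_mul {H G : Type} (gH : group_str H) (gG : group_str G)
  (Phi : G -> H -> H) (x y : G * H) : G * H :=
  (gmul gG (fst x) (fst y), gmul gH (snd x) (Phi (fst x) (snd y))).
Definition sd_inv {H G : Type} (gH : group_str H) (gG : group_str G)
  (Phi : G -> H -> H) (x : G * H) : G * H :=
  (ginv gG (fst x), Phi (ginv gG (fst x)) (ginv gH (snd x))).

Definition rota_baxter_sd {H G : Type} (gH : group_str H) (gG : group_str G)
  (Phi : G -> H -> H) (B : G * H -> G * H) : Prop :=
  forall x y, sd_mul gH gG Phi (B x) (B y) =
    B (sd_mul gH gG Phi (sd_mul gH gG Phi (sd_mul gH gG Phi x (B x)) y)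
                        (sd_inv gH gG Phi (B x))).

Definition sd_B {H G : Type} (gH : group_str H) (gG : group_str G)
  (Phi : G -> H -> H) (B1 : H -> H) (B0 : G -> G) (x : G * H) : G * H :=
  let a := fst x in let p := snd x in
  (B0 a, Phi (B0 a) (B1 (Phi (gmul gG (ginv gG (B0 a)) (ginv gG a)) p))).

From Stdlib Require Import Setoid.

(* Write [A = B0 a] and [u = B1 (Phi (A^-1 a^-1) p)], so that [B (a, p) = (A, Phi A u)].
   The first component of the Rota-Baxter identity for [B] is the one for [B0].
   Acting by [(A B0 b)^-1 (a A b A^-1)^-1] on the second component of
   [(a, p) B(a, p) (b, q) B(a, p)^-1] leaves a word of the form
   [z B1 z q' (B1 z)^-1] with [B1 z = Phi (B0 b)^-1 u]: condition (iii), applied to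
   [(B0 b)^-1 b^-1 B0 b] (whose image under [B0] is [(B0 b)^-1]), produces this [z],
   and the Rota-Baxter identity for [B1] then splits the word. *)

Section GroupTheory.

Variables (T : Type) (g : group_str T).

Local Infix "*" := (gmul g).
Local Notation "x ^-1" := (ginv g x).
Local Notation "1" := (gone g).

Lemma mulKg (x y : T) : x^-1 * (x * y) = y.
Proof. rewrite (gmulA T g), (gmulVl T g), (gmul1l T g). reflexivity. Qed.

Lemma mulKVg (x y : T) : x * (x^-1 * y) = y.
Proof. rewrite (gmulA T g), (gmulVr T g), (gmul1l T g). reflexivity. Qed.

Lemma idemp_eq1 (x : T) : x * x = x -> x = 1.
Proof.
  intro Exx.
  rewrite <- (mulKg x x), Exx. apply (gmulVl T g).
Qed.

Lemma invg_unique_l (x y : T) : x * y = 1 -> x = y^-1.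
Proof.
  intro Exy.
  rewrite <- (gmul1r T g x), <- (gmulVr T g y), (gmulA T g), Exy, (gmul1l T g).
  reflexivity.
Qed.

Lemma invg_unique_r (x y : T) : x * y = 1 -> y = x^-1.
Proof.
  intro Exy.
  rewrite <- (gmul1l T g y), <- (gmulVl T g x), <- (gmulA T g), Exy, (gmul1r T g).
  reflexivity.
Qed.

Lemma invgK (x : T) : (x^-1)^-1 = x.
Proof. symmetry. apply invg_unique_l, gmulVr. Qed.

Lemma invgM (x y : T) : (x * y)^-1 = y^-1 * x^-1.
Proof.
  symmetry. apply invg_unique_l.
  rewrite <- (gmulA T g), (mulKg x y). apply gmulVl.
Qed.

Lemma rota_baxter1 (B : T -> T) : rota_baxter g B -> B 1 = 1.
Proof.
  intro RB. apply idemp_eq1.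
  rewrite RB, (gmul1l T g), (gmul1r T g), (gmulVr T g). reflexivity.
Qed.

Lemma rota_baxterV (B : T -> T) (b : T) :
  rota_baxter g B -> B ((B b)^-1 * b^-1 * B b) = (B b)^-1.
Proof.
  intro RB. apply invg_unique_r.
  rewrite RB, !(gmulA T g), <- (gmulA T g b), (gmulVr T g), (gmul1r T g),
    (gmulVr T g), (gmul1l T g), (gmulVr T g).
  apply rota_baxter1, RB.
Qed.

End GroupTheory.

Lemma morph1 (T U : Type) (gT : group_str T) (gU : group_str U) (f : T -> U) :
  is_group_hom gT gU f -> f (gone gT) = gone gU.
Proof.
  intro Hf. apply idemp_eq1. rewrite <- Hf, (gmul1l T gT). reflexivity.
Qed.

Lemma morphV (T U : Type) (gT : group_str T) (gU : group_str U) (f : T -> U) (x : T) :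
  is_group_hom gT gU f -> f (ginv gT x) = ginv gU (f x).
Proof.
  intro Hf. apply invg_unique_l.
  rewrite <- Hf, (gmulVl T gT). apply (morph1 _ _ gT gU f Hf).
Qed.

Ltac group_norm T g :=
  repeat rewrite ?(invgM T g), ?(invgK T g), <- ?(gmulA T g), ?(gmulVl T g),
    ?(gmulVr T g), ?(gmul1l T g), ?(gmul1r T g), ?(mulKg T g), ?(mulKVg T g).

Section SemidirectRotaBaxter.

Variables (H G : Type) (gH : group_str H) (gG : group_str G) (Phi : G -> H -> H).

Hypothesis Phi_hom : forall a, is_group_hom gH gH (Phi a).
Hypothesis PhiM : forall a b p, Phi (gmul gG a b) p = Phi a (Phi b p).

Local Infix "*g" := (gmul gG) (at level 40, left associativity).
Local Infix "*h" := (gmul gH) (at level 40, left associativity).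
Local Notation "a ^-g" := (ginv gG a) (at level 3).
Local Notation "p ^-h" := (ginv gH p) (at level 3).

Lemma Phi_mul (a : G) (p q : H) : Phi a (p *h q) = Phi a p *h Phi a q.
Proof. apply Phi_hom. Qed.

Lemma Phi_inv (a : G) (p : H) : Phi a p^-h = (Phi a p)^-h.
Proof. apply (morphV _ _ gH gH), Phi_hom. Qed.

Lemma Phi_ext (a b : G) (p : H) : a = b -> Phi a p = Phi b p.
Proof. intros ->. reflexivity. Qed.

(* [w] plays the role of [B1 (Phi (c^-1 a^-1) p)] when [c = B0 a], [d = B0 b]. *)
Lemma sd_conj_snd (a b c d : G) (p q w : H) :
  let x := sd_mul gH gG Phi
             (sd_mul gH gG Phi (sd_mul gH gG Phi (a, p) (c, Phi c w)) (b, q))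
             (sd_inv gH gG Phi (c, Phi c w)) in
  Phi ((c *g d)^-g *g (fst x)^-g) (snd x) =
    Phi (d^-g *g b^-g) (Phi (c^-g *g a^-g) p *h w) *h Phi (d^-g *g b^-g) q
      *h (Phi d^-g w)^-h.
Proof.
  simpl. rewrite <- !Phi_inv, !Phi_mul, <- !PhiM.
  f_equal; [f_equal; [f_equal|]|]; apply Phi_ext; group_norm G gG; reflexivity.
Qed.

Variables (B1 : H -> H) (B0 : G -> G).

Hypothesis RB1 : rota_baxter gH B1.
Hypothesis RB0 : rota_baxter gG B0.
Hypothesis B_compat : forall a p, Phi (B0 a) (B1 p) =
  B1 (Phi (a *g B0 a) (p *h B1 p) *h (Phi (B0 a) (B1 p))^-h).

Lemma B1_twisted_mul (b : G) (p q : H) :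
  B1 (Phi ((B0 b)^-g *g b^-g) (p *h B1 p) *h q *h (Phi (B0 b)^-g (B1 p))^-h) =
    Phi (B0 b)^-g (B1 p) *h B1 q.
Proof.
  assert (Eshift : Phi (B0 b)^-g (B1 p) =
               B1 (Phi ((B0 b)^-g *g b^-g) (p *h B1 p) *h (Phi (B0 b)^-g (B1 p))^-h)).
  { pose proof (B_compat ((B0 b)^-g *g b^-g *g B0 b) p) as E.
    rewrite (rota_baxterV G gG B0 b RB0), (Phi_ext ((B0 b)^-g *g b^-g *g B0 b *g (B0 b)^-g)
                                                 ((B0 b)^-g *g b^-g)) in E.
    - exact E.
    - group_norm G gG. reflexivity. }
  rewrite Eshift at 2. rewrite RB1, <- Eshift.
  f_equal. group_norm H gH. reflexivity.
Qed.

Theorem sd_B_rota_baxter : rota_baxter_sd gH gG Phi (sd_B gH gG Phi B1 B0).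
Proof.
  intros [a p] [b q].
  pose proof (sd_conj_snd a b (B0 a) (B0 b) p q
                (B1 (Phi ((B0 a)^-g *g a^-g) p))) as Esnd.
  unfold sd_B, sd_mul, sd_inv in *. simpl in *.
  rewrite <- RB0, Esnd, B1_twisted_mul.
  f_equal. rewrite Phi_mul, <- !PhiM. f_equal. apply Phi_ext.
  group_norm G gG. reflexivity.
Qed.

End SemidirectRotaBaxter.

Theorem theorem2p6 (H G : Type) (gH : group_str H) (gG : group_str G)
  (t : H -> G) (Phi : G -> H -> H) (B1 : H -> H) (B0 : G -> G) :
  crossed_module gH gG t Phi ->
  rota_baxter_cm gH gG t Phi B1 B0 ->
  rota_baxter_sd gH gG Phi (sd_B gH gG Phi B1 B0).
Proof.
  intros [_ [[Phi_hom [_ PhiM]] _]] [RB1 [RB0 [_ B_compat]]].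
  exact (sd_B_rota_baxter H G gH gG Phi Phi_hom PhiM B1 B0 RB1 RB0 B_compat).
Qed.
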